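(* Let $p$ be a prime, $A$ a torsion-free $\mathbb{Z}_{(p)}$-algebra, $\mathfrak a\subseteq A$ a divided-power ideal, and $P,Q\in A[X]$ monic polynomials. The following are equivalent: (1) $e_n(P)\equiv e_n(Q)\pmod{\mathfrak a}$ for every $n\ge1$; (2) $e_n(P)\equiv e_n(Q)\pmod{\mathfrak a}$ for every $n$ with $1\le n\le\max\{\deg P,\deg Q\}$; (3) $p_n(P)\equiv p_n(Q)\pmod{n\mathfrak a}$ for every $n\ge 1$; (4) $p_n(P)\equiv p_n(Q)\pmod{n\mathfrak a}$ for every $n$ with $1\le n\le\max\{\deg P,\deg Q\}$.
   Context: $\mathbb{Z}_{(p)}\subseteq\mathbb{Q}$ is the ring of rationals $a/b$ with $p\nmid b$. An ideal $\mathfrak a$ of a torsion-free $\mathbb{Z}_{(p)}$-algebra $A$ is a divided-power ideal if $a^p\in p\,\mathfrak a$ for all $a\in\mathfrak a$ (equivalently $a^k/k!\in\mathfrak a$ in $A\otimes\mathbb{Q}$ for all $a\in\mathfrak a$, $k\ge1$). For a monic $P=X^d+a_1X^{d-1}+\dots+a_d\in A[X]$: $e_0(P)=1$, $e_n(P)=(-1)^na_n$ for $1\le n\le d$, $e_n(P)=0$ for $n>d$; and $p_n(P)$ for $n\ge1$ is defined recursively by Newton's identities $p_n(P)=\sum_{i=1}^{n-1}(-1)^{i-1}e_i(P)p_{n-i}(P)+(-1)^{n-1}n\,e_n(P)$ (when $A$ is a domain, $p_n(P)=\sum_i\alpha_i^n$ over the roots $\alpha_i$ of $P$ with multiplicity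 in an extension). $n\mathfrak a$ denotes the ideal $\{na: a\in\mathfrak a\}$. *)

From mathcomp Require Import all_boot all_order all_algebra.
Set Implicit Arguments. Unset Strict Implicit. Unset Printing Implicit Defensive.
Import Order.TTheory GRing.Theory Num.Theory.
Local Open Scope ring_scope.

Definition is_ideal (A : comNzRingType) (I : A -> Prop) : Prop :=
  [/\ I 0, (forall x y, I x -> I y -> I (x + y)) & (forall a x, I x -> I (a * x))].

Definition Zp_loc_algebra (p : nat) (A : comNzRingType) : Prop :=
  forall n : nat, coprime n p -> exists b : A, n%:R * b = 1.

Definition torsion_free (A : comNzRingType) : Prop :=
  forall (n : nat) (a : A), (0 < n)%N -> n%:R * a = 0 -> a = 0.

Definition in_mul_ideal (A : comNzRingType) (n : nat) (I : A -> Prop) (x : A) : Prop :=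
  exists a, I a /\ x = n%:R * a.

Definition dp_ideal (p : nat) (A : comNzRingType) (I : A -> Prop) : Prop :=
  is_ideal I /\ forall a, I a -> in_mul_ideal p I (a ^+ p).

(* e_n(P) for monic P = X^d + a_1 X^(d-1) + ... + a_d :
   e_n = (-1)^n a_n = (-1)^n P`_(d-n) for n <= d, 0 for n > d (e_0 = 1). *)
Definition esym_poly (A : comNzRingType) (P : {poly A}) (n : nat) : A :=
  if (n <= (size P).-1)%N then (-1) ^+ n * P`_((size P).-1 - n) else 0.

(* power sums via Newton's identities, with fuel k *)
Fixpoint psum_fuel (A : comNzRingType) (P : {poly A}) (k n : nat) : A :=
  match k with
  | 0 => 0
  | k'.+1 =>
      \sum_(1 <= i < n) (-1) ^+ i.-1 * esym_poly P i * psum_fuel P k' (n - i)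
      + (-1) ^+ n.-1 * n%:R * esym_poly P n
  end.

Definition psum_poly (A : comNzRingType) (P : {poly A}) (n : nat) : A :=
  psum_fuel P n n.

From mathcomp Require Import all_boot all_order all_algebra.
From mathcomp Require Import zify ring.
Set Implicit Arguments. Unset Strict Implicit. Unset Printing Implicit Defensive.
Import Order.TTheory GRing.Theory Num.Theory.
Local Open Scope ring_scope.

(* Write [a_i = (-1)^i e_i] for the coefficients of a monic polynomial read
   from the top.  Newton's identities say that [T(t) = sum_i a_i t^i] and
   [S(t) = sum_(n >= 1) p_n t^n] satisfy [T S = - t T'].  If the [a_i] of [P]
   and [Q] agree modulo [a], then [T_P = (1 + x) T_Q] with [x] in [a[[t]]] and
   [x(0) = 0], so [S_P - S_Q = - t x' / (1 + x) = - sum_k t x' (-x)^k].  The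
   coefficient of [t^n] in [t x' (-x)^k] is [- n / (k + 1)] times that of
   [(-x)^(k+1)], and the latter lies in [(k + 1) a[t]] because divided powers
   give [y^m \in m a] for [y \in a]; torsion-freeness makes the division by
   [k + 1] legitimate.  Conversely, if the [a_i] agree modulo [a] below [n],
   then [p_n(P) - p_n(Q) = - n (a_n(P) - a_n(Q))] modulo [n a], and one
   cancels [n] again. *)

Lemma torsion_free_mulrnI (R : comNzRingType) m :
  torsion_free R -> (0 < m)%N -> injective (fun a : R => a *+ m).
Proof.
move=> tfR m_gt0 a b /= e; apply/eqP; rewrite -subr_eq0; apply/eqP/(tfR m) => //.
by rewrite mulr_natl mulrnBl e subrr.
Qed.

Section IdealFacts.
Variables (R : comNzRingType) (J : R -> Prop).
Hypothesis idealJ : is_ideal J.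

Lemma ideal0 : J 0. Proof. by case: idealJ. Qed.

Lemma idealD x y : J x -> J y -> J (x + y). Proof. by case: idealJ => _ + _; apply. Qed.

Lemma idealMl a x : J x -> J (a * x). Proof. by case: idealJ => _ _; apply. Qed.

Lemma idealMr a x : J x -> J (x * a). Proof. by rewrite mulrC; apply: idealMl. Qed.

Lemma idealN x : J x -> J (- x). Proof. by rewrite -mulN1r; apply: idealMl. Qed.

Lemma idealX x k : J x -> (0 < k)%N -> J (x ^+ k).
Proof. by move=> Jx; case: k => // k _; rewrite exprSr; apply: idealMl. Qed.

Lemma ideal_sum (T : Type) (r : seq T) (P : pred T) (F : T -> R) :
  (forall i, P i -> J (F i)) -> J (\sum_(i <- r | P i) F i).
Proof. by apply: big_ind; [exact: ideal0 | exact: idealD]. Qed.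

Lemma mul_ideal0 n : in_mul_ideal n J 0.
Proof. by exists 0; rewrite mulr0; split => //; exact: ideal0. Qed.

Lemma mul_idealD n x y :
  in_mul_ideal n J x -> in_mul_ideal n J y -> in_mul_ideal n J (x + y).
Proof. by move=> [a [Ja ->]] [b [Jb ->]]; exists (a + b); rewrite mulrDr; split => //; apply: idealD. Qed.

Lemma mul_idealMl n c x : in_mul_ideal n J x -> in_mul_ideal n J (c * x).
Proof. by move=> [a [Ja ->]]; exists (c * a); rewrite mulrCA; split => //; apply: idealMl. Qed.

Lemma mul_idealN n x : in_mul_ideal n J x -> in_mul_ideal n J (- x).
Proof. by rewrite -mulN1r; apply: mul_idealMl. Qed.

Lemma mul_idealB n x y :
  in_mul_ideal n J x -> in_mul_ideal n J y -> in_mul_ideal n J (x - y).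
Proof. by move=> Jx Jy; apply: mul_idealD => //; apply: mul_idealN. Qed.

Lemma mul_ideal_sum n (T : Type) (r : seq T) (P : pred T) (F : T -> R) :
  (forall i, P i -> in_mul_ideal n J (F i)) -> in_mul_ideal n J (\sum_(i <- r | P i) F i).
Proof. by apply: big_ind; [exact: mul_ideal0 | exact: mul_idealD]. Qed.

Lemma mul_ideal_natrK n x : torsion_free R -> (0 < n)%N ->
  in_mul_ideal n J (n%:R * x) -> J x.
Proof.
move=> tfR n_gt0 [a [Ja e]]; suff -> : x = a by [].
by apply: (torsion_free_mulrnI tfR n_gt0); rewrite /= -mulr_natl e mulr_natl.
Qed.

(* The middle binomial coefficients of [(y + z) ^+ p] are divisible by [p]. *)
Lemma dp_exprD p y z : prime p -> J y -> J z ->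
  in_mul_ideal p J (y ^+ p) -> in_mul_ideal p J (z ^+ p) ->
  in_mul_ideal p J ((y + z) ^+ p).
Proof.
move=> p_pr Jy Jz Jyp Jzp; have p_gt0 := prime_gt0 p_pr.
move: p_pr Jyp Jzp; rewrite -(prednK p_gt0) => p_pr Jyp Jzp.
rewrite exprDn big_ord_recr /= big_ord_recl /= subn0 subnn.
rewrite !expr0 mulr1 mul1r bin0 binn !mulr1n.
apply: mul_idealD => //; apply: mul_idealD => //.
apply: mul_ideal_sum => -[i lt_i_p] _ /=.
have /dvdnP [k ->] : (p.-1.+1 %| 'C(p.-1.+1, i.+1))%N.
  by apply: prime_dvd_bin; rewrite //= ltnS.
exists (y ^+ (p.-1.+1 - i.+1) * z ^+ i.+1 * k%:R); split.
  by apply: idealMr; apply: idealMl; apply: idealX.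
by rewrite -mulr_natr natrM mulrA mulrC.
Qed.
End IdealFacts.

Section DividedPowers.
Variables (R : comNzRingType) (J : R -> Prop) (p : nat).
Hypotheses (p_pr : prime p) (ZpR : Zp_loc_algebra p R) (dpJ : dp_ideal p J).
Let idealJ : is_ideal J := dpJ.1.

Lemma dp_expr_pexpn a v : J a -> exists2 b, J b & a ^+ (p ^ v) = p%:R ^+ v * b.
Proof.
move=> Ja; elim: v => [|v [b Jb eb]]; first by exists a; rewrite ?expr0 ?mul1r.
have [c [Jc ec]] := dpJ.2 b Jb.
exists (p%:R ^+ (v * p.-1) * c); first exact: idealMl.
rewrite expnSr exprM eb exprMn ec -exprM [LHS]mulrA -exprSr [RHS]mulrA -exprD.
by congr (_ ^+ _ * _); have := prednK (prime_gt0 p_pr); lia.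
Qed.

(* Write [m = p ^ v * u] with [u] prime to [p], hence invertible in [R]. *)
Lemma dp_expr a m : J a -> (0 < m)%N -> in_mul_ideal m J (a ^+ m).
Proof.
move=> Ja m_gt0; have [u u_coprime em] := pfactor_coprime p_pr m_gt0.
set v := logn p m in em.
have u_gt0 : (0 < u)%N by move: m_gt0; rewrite em muln_gt0 => /andP[].
have [w uw] : exists w : R, u%:R * w = 1 by apply: ZpR; rewrite coprime_sym.
have [b Jb eb] := dp_expr_pexpn v Ja.
exists (w * (p%:R ^+ (v * u.-1) * b ^+ u)); split.
  by apply/(idealMl idealJ)/(idealMl idealJ)/(idealX idealJ).
rewrite {1}em mulnC exprM eb exprMn -exprM em natrM natrX.
have -> : (v * u = v + v * u.-1)%N by have := prednK u_gt0; lia.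
by rewrite exprD -[LHS]mul1r -{1}uw; ring.
Qed.
End DividedPowers.

Definition coef_ideal (R : comNzRingType) (J : R -> Prop) (x : {poly R}) : Prop :=
  forall i, J x`_i.

Section CoefIdeal.
Variables (R : comNzRingType) (J : R -> Prop).

Lemma coef_ideal_is_ideal : is_ideal J -> is_ideal (coef_ideal J).
Proof.
move=> idealJ; split.
- by move=> i; rewrite coef0; apply: ideal0.
- by move=> x y Jx Jy i; rewrite coefD; apply: idealD.
- move=> a x Jx i; rewrite coefM; apply: (ideal_sum idealJ) => j _.
  exact: idealMl.
Qed.

Lemma coef_idealC c : is_ideal J -> J c -> coef_ideal J c%:P.
Proof. by move=> idealJ Jc i; rewrite coefC; case: eqP => // _; apply: ideal0. Qed.

Lemma Zp_loc_algebra_poly p : Zp_loc_algebra p R -> Zp_loc_algebra p {poly R}.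
Proof.
move=> ZpR n n_coprime; have [b nb] := ZpR n n_coprime.
by exists b%:P; rewrite -polyC_natr -polyCM nb.
Qed.

Lemma coef_ideal_dp p : prime p -> dp_ideal p J -> dp_ideal p (coef_ideal J).
Proof.
move=> p_pr [idealJ dpJ]; have idealXJ := coef_ideal_is_ideal idealJ.
split=> // x; elim/poly_ind: x => [_|q c IHq Jx].
  by rewrite expr0n gtn_eqF ?prime_gt0 //; apply: mul_ideal0.
have Jq : coef_ideal J q.
  by move=> i; have := Jx i.+1; rewrite coefD coefMX coefC /= addr0.
have Jc : J c by have := Jx 0%N; rewrite coefD coefMX coefC /= add0r.
apply: (dp_exprD idealXJ p_pr); [exact: (idealMr idealXJ) | exact: coef_idealC | |].
  have [b [Jb eb]] := IHq Jq; exists (b * 'X^p).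
  by rewrite exprMn eb mulrA; split => //; apply: (idealMr idealXJ).
have [d [Jd ed]] := dpJ c Jc; exists d%:P.
by rewrite -polyC_exp ed polyCM polyC_natr; split => //; apply: coef_idealC.
Qed.
End CoefIdeal.

Section NewtonSums.
Variable R : comNzRingType.
Implicit Types c : nat -> R.

Fixpoint newton_fuel (c : nat -> R) (k n : nat) : R :=
  match k with
  | 0 => 0
  | k.+1 => - (\sum_(1 <= i < n) c i * newton_fuel c k (n - i)) - n%:R * c n
  end.

(* [newton c n] is the power sum [p_n] of a monic polynomial whose
   coefficients, read from the top, are [c 0 = 1, c 1, c 2, ...]. *)
Definition newton c n := newton_fuel c n n.

Lemma newton_fuel0 c k : newton_fuel c k 0 = 0.
Proof. by case: k => //= k; rewrite big_geq // oppr0 mul0r subr0. Qed.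

Lemma newton_fuelE c k1 k2 n :
  (n <= k1)%N -> (n <= k2)%N -> newton_fuel c k1 n = newton_fuel c k2 n.
Proof.
elim: k1 k2 n => [|k1 IH] k2 [|n] le1 le2; rewrite ?newton_fuel0 //.
case: k2 le2 => // k2 le2 /=; congr (- _ - _).
by apply: eq_big_nat => i /andP[i_gt0 lt_i_n]; rewrite (IH k2) //; lia.
Qed.

Lemma newtonE c n :
  newton c n = - (\sum_(1 <= i < n) c i * newton c (n - i)) - n%:R * c n.
Proof.
case: n => [|n]; first by rewrite /newton /= big_geq // oppr0 mul0r subr0.
rewrite /newton /=; congr (- _ - _); apply: eq_big_nat => i /andP[i_gt0 lt_i_n].
by rewrite (newton_fuelE _ (k2 := (n.+1 - i)%N)) //; lia.
Qed.

Lemma eq_newton c c' n : (forall i, (i <= n)%N -> c i = c' i) -> newton c n = newton c' n.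
Proof.
elim/ltn_ind: n => n IH eq_cc'; rewrite !newtonE eq_cc' //; congr (- _ - _).
apply: eq_big_nat => i /andP[i_gt0 lt_i_n]; rewrite eq_cc'; last by lia.
by rewrite IH; [| lia | move=> j le_j; apply: eq_cc'; lia].
Qed.

Lemma newtonB_last c c' n : (forall i, (i < n)%N -> c i = c' i) ->
  newton c n - newton c' n = - (n%:R * (c n - c' n)).
Proof.
move=> eq_cc'; rewrite !newtonE.
rewrite (eq_big_nat _ _ (F2 := fun i => c' i * newton c' (n - i))); first by ring.
move=> i /andP[i_gt0 lt_i_n]; rewrite eq_cc' //; congr (_ * _).
by apply: eq_newton => j le_j; apply: eq_cc'; lia.
Qed.
End NewtonSums.

Section TruncatedCongruence.
Variables (R : comNzRingType) (N : nat).
Implicit Types a b q : {poly R}.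

Definition eqmodX a b := exists r, a - b = r * 'X^(N.+1).

Lemma eqmodX_eq a b : a = b -> eqmodX a b.
Proof. by move=> ->; exists 0; rewrite subrr mul0r. Qed.

Lemma eqmodX_sym a b : eqmodX a b -> eqmodX b a.
Proof. by move=> [r e]; exists (- r); rewrite mulNr -e opprB. Qed.

Lemma eqmodX_trans b a c : eqmodX a b -> eqmodX b c -> eqmodX a c.
Proof. by move=> [r e] [s f]; exists (r + s); rewrite mulrDl -e -f; ring. Qed.

Lemma eqmodXD a b c d : eqmodX a b -> eqmodX c d -> eqmodX (a + c) (b + d).
Proof. by move=> [r e] [s f]; exists (r + s); rewrite mulrDl -e -f; ring. Qed.

Lemma eqmodXN a b : eqmodX a b -> eqmodX (- a) (- b).
Proof. by move=> [r e]; exists (- r); rewrite mulNr -e; ring. Qed.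

Lemma eqmodXMl c a b : eqmodX a b -> eqmodX (c * a) (c * b).
Proof. by move=> [r e]; exists (c * r); rewrite -mulrA -e; ring. Qed.

Lemma eqmodXMr c a b : eqmodX a b -> eqmodX (a * c) (b * c).
Proof. by move=> [r e]; exists (c * r); rewrite -mulrA -e; ring. Qed.

Lemma eqmodX_coef a b i : eqmodX a b -> (i <= N)%N -> a`_i = b`_i.
Proof.
by move=> [r e] le_iN; apply/eqP; rewrite -subr_eq0 -coefB e coefMXn ltnS le_iN.
Qed.

Lemma coef_eqmodX a b : (forall i, (i <= N)%N -> a`_i = b`_i) -> eqmodX a b.
Proof.
move=> eq_ab; exists (drop_poly N.+1 (a - b)).
rewrite -{1}(poly_take_drop N.+1 (a - b)) -[RHS]add0r; congr (_ + _).
apply/polyP => i; rewrite coef_take_poly coef0 coefB.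
by case: ltnP => // lt_iN; rewrite eq_ab ?subrr.
Qed.

Lemma eqmodX_exp0 q : q`_0 = 0 -> eqmodX (q ^+ N.+1) 0.
Proof.
move=> q0; have -> : q = drop_poly 1 q * 'X.
  rewrite -{1}(poly_take_drop 1 q) expr1 -[RHS]add0r; congr (_ + _).
  by apply/polyP => -[|i]; rewrite coef_take_poly coef0.
by exists (drop_poly 1 q ^+ N.+1); rewrite subr0 exprMn.
Qed.

Lemma eqmodX_geom q : q`_0 = 0 -> eqmodX ((1 - q) * \sum_(k < N.+1) q ^+ k) 1.
Proof.
move=> /eqmodX_exp0 [r e]; exists (- r).
by rewrite -[1 - q]opprB mulNr -subrX1 mulNr -e; ring.
Qed.

Lemma eqmodX_cancel c d a b : eqmodX (c * d) 1 -> eqmodX (c * a) (c * b) -> eqmodX a b.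
Proof.
move=> [r e] [s f]; exists (d * s - r * (a - b)).
have -> : (d * s - r * (a - b)) * 'X^(N.+1) = d * (s * 'X^(N.+1)) - r * 'X^(N.+1) * (a - b).
  by ring.
by rewrite -e -f; ring.
Qed.

Lemma eqmodX_deriv a b : eqmodX a b -> eqmodX ('X * a^`()) ('X * b^`()).
Proof.
move=> [r e]; exists ('X * r^`() + r *+ N.+1).
rewrite -mulrBr -derivB e derivM derivXn /= mulrDr mulrDl; congr (_ + _); first by ring.
by rewrite !mulrnAr mulrnAl exprS mulrCA.
Qed.
End TruncatedCongruence.

Arguments eqmodX_eq {R N a b}.

Lemma eqmodX_unit (R : comNzRingType) N (q : {poly R}) :
  q`_0 = 1 -> exists g, eqmodX N (q * g) 1.
Proof.
move=> q0; exists (\sum_(k < N.+1) (1 - q) ^+ k).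
by have := @eqmodX_geom R N (1 - q); rewrite coefB coef1 q0 subrr opprB subrKC; apply.
Qed.

Section NewtonSeries.
Variables (R : comNzRingType) (N : nat).
Implicit Types c : nat -> R.

Definition trunc_series c : {poly R} := \poly_(i < N.+1) c i.

Lemma trunc_series_newton c : c 0%N = 1 ->
  eqmodX N (trunc_series c * trunc_series (newton c)) (- ('X * (trunc_series c)^`())).
Proof.
move=> c0; apply: coef_eqmodX => -[|i] le_iN.
  by rewrite coefM big_ord_recl big_ord0 !coef_poly /= /newton /= mulr0 addr0 coefN coefXM oppr0.
rewrite coefM coefN coefXM coef_deriv /= big_ord_recl big_ord_recr /= !coef_poly /=.
rewrite subn0 subnn ltnS le_iN c0 mul1r [newton c 0]/newton /= mulr0 addr0 newtonE big_add1 /= big_mkord.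
have -> : \sum_(j < i) (trunc_series c)`_(bump 0 j) * (trunc_series (newton c))`_(i.+1 - bump 0 j)
    = \sum_(j < i) c j.+1 * newton c (i.+1 - j.+1).
  by apply: eq_bigr => -[j lt_ji] _; rewrite /bump /= !add1n !coef_poly !ifT //; lia.
by rewrite /bump /= -mulr_natl; ring.
Qed.

Lemma trunc_series_newtonB c c' (U : {poly R}) : c 0%N = 1 -> c' 0%N = 1 ->
  eqmodX N (trunc_series c) (U * trunc_series c') ->
  eqmodX N (U * (trunc_series (newton c) - trunc_series (newton c'))) (- ('X * U^`())).
Proof.
set E := trunc_series c; set F := trunc_series c'.
set Pc := trunc_series (newton c); set Pc' := trunc_series (newton c').
move=> c0 c'0 eqE.
have [G FG] : exists G, eqmodX N (F * G) 1 by apply: eqmodX_unit; rewrite coef_poly.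
apply: (eqmodX_cancel FG).
have -> : F * (U * (Pc - Pc')) = U * F * Pc - U * (F * Pc') by ring.
apply: eqmodX_trans (eqmodXD (eqmodXMr Pc (eqmodX_sym eqE)) (eqmodX_eq (erefl _))) _.
apply: eqmodX_trans (eqmodXD (trunc_series_newton c0)
  (eqmodXN (eqmodXMl U (trunc_series_newton c'0)))) _.
apply: eqmodX_trans (eqmodXD (eqmodXN (eqmodX_deriv eqE)) (eqmodX_eq (erefl _))) _.
by apply: eqmodX_eq; rewrite derivM; ring.
Qed.

(* [U = 1 + x] is a unit with inverse [\sum_k (- x) ^+ k], and the logarithmic
   derivative [U^`() / U] expands into that geometric series. *)
Lemma trunc_series_newtonB_log c c' (x : {poly R}) : c 0%N = 1 -> c' 0%N = 1 ->
  x`_0 = 0 -> eqmodX N (trunc_series c) ((1 + x) * trunc_series c') ->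
  eqmodX N (trunc_series (newton c) - trunc_series (newton c'))
           (- ('X * x^`() * \sum_(k < N.+1) (- x) ^+ k)).
Proof.
move=> c0 c'0 x0 eqE; set S := \sum_(k < N.+1) _.
have US : eqmodX N ((1 + x) * S) 1.
  by have := @eqmodX_geom R N (- x); rewrite coefN x0 oppr0 opprK; apply.
apply: (eqmodX_cancel US).
apply: eqmodX_trans (trunc_series_newtonB c0 c'0 eqE) _.
rewrite derivD derivC add0r.
apply: eqmodX_trans (eqmodX_eq _) (eqmodX_trans (eqmodXMl (- ('X * x^`())) (eqmodX_sym US)) _).
  by rewrite mulr1.
by apply: eqmodX_eq; ring.
Qed.
End NewtonSeries.

Section NewtonCongruence.
Variables (R : comNzRingType) (J : R -> Prop) (p : nat).
Hypotheses (p_pr : prime p) (ZpR : Zp_loc_algebra p R) (tfR : torsion_free R).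
Hypothesis dpJ : dp_ideal p J.
Let idealJ : is_ideal J := dpJ.1.
Let idealXJ : is_ideal (coef_ideal J) := coef_ideal_is_ideal idealJ.

(* [('X * x^`() * (- x) ^+ k) *+ k.+1 = - 'X * ((- x) ^+ k.+1)^`()], and
   [(- x) ^+ k.+1] lies in [k.+1 * J[X]] by the divided powers. *)
Lemma coef_logder_term N x k : (0 < N)%N -> coef_ideal J x ->
  in_mul_ideal N J (('X * x^`() * (- x) ^+ k)`_N).
Proof.
move=> N_gt0 Jx.
have [y [Jy ey]] : in_mul_ideal k.+1 (coef_ideal J) ((- x) ^+ k.+1).
  apply: (dp_expr p_pr (Zp_loc_algebra_poly ZpR) (coef_ideal_dp p_pr dpJ)) => //.
  exact: (idealN idealXJ).
have key : 'X * ((- x) ^+ k.+1)^`() = - ('X * x^`() * (- x) ^+ k) *+ k.+1.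
  by rewrite deriv_exp derivN /= mulrnAr mulNr mulrN mulrA.
have := congr1 (fun q : {poly R} => q`_N) key.
rewrite ey mulr_natl derivMn coefXM coefMn coefMn coefN (negbTE (lt0n_neq0 N_gt0)).
rewrite coef_deriv (prednK N_gt0) => e.
exists (- y`_N); split; first exact: (idealN idealJ).
apply: (torsion_free_mulrnI tfR (ltn0Sn k)).
by rewrite /= mulrN mulr_natl mulNrn e mulNrn opprK.
Qed.

Lemma newton_congr N c c' : (0 < N)%N -> c 0%N = 1 -> c' 0%N = 1 ->
  (forall i, (i <= N)%N -> J (c i - c' i)) ->
  in_mul_ideal N J (newton c N - newton c' N).
Proof.
move=> N_gt0 c0 c'0 Jcc'.
set E := trunc_series N c; set F := trunc_series N c'.
have [G FG] : exists G, eqmodX N (F * G) 1 by apply: eqmodX_unit; rewrite coef_poly.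
have JEF : coef_ideal J (E - F).
  move=> i; rewrite coefB !coef_poly; case: ltnP => [le_iN | _]; first exact: Jcc'.
  by rewrite subrr; exact: (ideal0 idealJ).
set x := (E - F) * G.
have x0 : x`_0 = 0 by rewrite coef0M coefB !coef_poly /= c0 c'0 subrr mul0r.
have eqE : eqmodX N E ((1 + x) * F).
  apply: (eqmodX_trans (b := (E - F) * (F * G) + F)); last first.
    by apply: eqmodX_eq; rewrite /x; ring.
  apply: eqmodX_trans _ (eqmodXD (eqmodX_sym (eqmodXMl (E - F) FG)) (eqmodX_eq (erefl F))).
  by apply: eqmodX_eq; ring.
have := eqmodX_coef (trunc_series_newtonB_log c0 c'0 x0 eqE) (leqnn N).
rewrite coefB !coef_poly ltnSn => ->.
rewrite coefN mulr_sumr coef_sum; apply/(mul_idealN idealJ)/(mul_ideal_sum idealJ) => k _.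
by apply: coef_logder_term => //; apply: (idealMr idealXJ).
Qed.

(* Compare [c] with the sequence that agrees with [c] below [n] and with [c']
   from [n] on: the power sums differ exactly by [n * (c n - c' n)]. *)
Lemma newton_congr_last n c c' : (0 < n)%N -> c 0%N = 1 -> c' 0%N = 1 ->
  (forall i, (i < n)%N -> J (c i - c' i)) ->
  in_mul_ideal n J (newton c n - newton c' n) -> J (c n - c' n).
Proof.
move=> n_gt0 c0 c'0 Jcc' Jn.
pose h i := if (i < n)%N then c i else c' i.
have Jh : in_mul_ideal n J (newton h n - newton c' n).
  apply: newton_congr => //; first by rewrite /h n_gt0.
  move=> i _; rewrite /h; case: ifP => [lt_in | _]; first exact: Jcc'.
  by rewrite subrr; exact: (ideal0 idealJ).
have e := newtonB_last (c := c) (c' := h) (n := n).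
rewrite /h ltnn in e.
apply: (mul_ideal_natrK tfR n_gt0).
have -> : n%:R * (c n - c' n) = - ((newton c n - newton c' n) - (newton h n - newton c' n)).
  by rewrite -[LHS]opprK -e ?opprK => [|i lt_in]; [ring | rewrite lt_in].
exact/(mul_idealN idealJ)/(mul_idealB idealJ).
Qed.

Lemma newton_congrP N c c' : c 0%N = 1 -> c' 0%N = 1 ->
  (forall i, (i <= N)%N -> J (c i - c' i)) <->
  (forall n, (0 < n <= N)%N -> in_mul_ideal n J (newton c n - newton c' n)).
Proof.
move=> c0 c'0; split=> [Jcc' n /andP[n_gt0 le_nN] | Jn].
  by apply: newton_congr => // i le_in; apply: Jcc'; apply: leq_trans le_nN.
elim/ltn_ind=> n IH le_nN; case: n IH le_nN => [|n] IH le_nN.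
  by rewrite c0 c'0 subrr; exact: (ideal0 idealJ).
apply: newton_congr_last => //; last by apply: Jn.
by move=> i lt_in; apply: IH => //; apply: leq_trans (ltnW lt_in) le_nN.
Qed.
End NewtonCongruence.

Section PolynomialCoefficients.
Variable R : comNzRingType.
Implicit Types P Q : {poly R}.

(* The coefficient [a_i] of [P = X^d + a_1 X^(d-1) + ... + a_d]. *)
Definition signed_esym P i := (-1) ^+ i * esym_poly P i.

Lemma signed_esym0 P : P \is monic -> signed_esym P 0 = 1.
Proof. by move=> /monicP lP; rewrite /signed_esym /esym_poly leq0n subn0 -lead_coefE lP !mul1r. Qed.

Lemma psum_polyE P n : psum_poly P n = newton (signed_esym P) n.
Proof.
suff fuelE k m : psum_fuel P k m = newton_fuel (signed_esym P) k m by apply: fuelE.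
elim: k m => [|k IH] m //=; congr (_ + _).
  rewrite -sumrN; apply: eq_big_nat => -[|i] // _; rewrite IH /signed_esym exprS.
  by ring.
by case: m => [|m]; rewrite /signed_esym ?exprS /=; ring.
Qed.

Lemma esym_polyB_eq0 P Q n : (maxn (size P).-1 (size Q).-1 < n)%N ->
  esym_poly P n - esym_poly Q n = 0.
Proof. by rewrite gtn_max /esym_poly !ltnNge => /andP[/negbTE -> /negbTE ->]; rewrite subrr. Qed.

Lemma ideal_signed_esymB (J : R -> Prop) P Q n : is_ideal J ->
  J (signed_esym P n - signed_esym Q n) <-> J (esym_poly P n - esym_poly Q n).
Proof.
move=> idealJ; rewrite /signed_esym -mulrBr; split=> JPQ; last exact: (idealMl idealJ).
have <- : (-1) ^+ n * ((-1) ^+ n * (esym_poly P n - esym_poly Q n)) =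
    esym_poly P n - esym_poly Q n by rewrite mulrA -exprMn mulrNN mulr1 expr1n mul1r.
exact: (idealMl idealJ).
Qed.
End PolynomialCoefficients.

Theorem theorem2p7 (p : nat) (A : comNzRingType) (I : A -> Prop) (P Q : {poly A}) :
  prime p -> Zp_loc_algebra p A -> torsion_free A -> dp_ideal p I ->
  P \is monic -> Q \is monic ->
  [<-> (forall n : nat, (1 <= n)%N -> I (esym_poly P n - esym_poly Q n));
       (forall n : nat, (1 <= n <= maxn (size P).-1 (size Q).-1)%N ->
           I (esym_poly P n - esym_poly Q n));
       (forall n : nat, (1 <= n)%N ->
           in_mul_ideal n I (psum_poly P n - psum_poly Q n));
       (forall n : nat, (1 <= n <= maxn (size P).-1 (size Q).-1)%N ->
           in_mul_ideal n I (psum_poly P n - psum_poly Q n))].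
Proof.
move=> p_pr ZpA tfA dpI monP monQ; have idealI := dpI.1.
set M := maxn _ _; have c0 := signed_esym0 monP; have c'0 := signed_esym0 monQ.
have esym_beyond n : (M < n)%N -> I (esym_poly P n - esym_poly Q n).
  by move=> /esym_polyB_eq0 ->; apply: ideal0.
have signed_esym_all : (forall n, (1 <= n <= M)%N -> I (esym_poly P n - esym_poly Q n)) ->
    forall i, I (signed_esym P i - signed_esym Q i).
  move=> JPQ [|i]; first by rewrite c0 c'0 subrr; apply: ideal0.
  apply/ideal_signed_esymB => //.
  by case: (leqP i.+1 M) => [le_iM | /esym_beyond //]; apply: JPQ.
tfae=> [JPQ n /andP[n_gt0 _] | JPQ n n_gt0 | JPQ n /andP[n_gt0 _] | JPQ n n_gt0].
- exact: JPQ.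
- rewrite !psum_polyE; apply: (newton_congr p_pr ZpA tfA dpI n_gt0 c0 c'0) => i _.
  exact: signed_esym_all.
- exact: JPQ.
- case: (leqP n M) => [le_nM | /esym_beyond //]; apply/ideal_signed_esymB => //.
  move: n le_nM {n_gt0}; apply/(newton_congrP p_pr ZpA tfA dpI M c0 c'0) => n le_nM.
  by rewrite -!psum_polyE; apply: JPQ.
Qed.
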